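(* Consider the repeated Prisoner's Dilemma with $A_1=A_2=\{C,D\}$. Let $k$ be a natural number, let $k_0$ be the largest integer with $k_0^2+k_0\le k$, and let $k_1,k_2,k_3$ be positive integers with $k_1+k_2+k_3=k_0$. Let $\omega_0=k_1\times(D,D)+k_2\times(D,C)+k_3\times(C,C)$ and \[\omega^*=k^3\times(D,D)+\sum_{n=1}^{k}\big(k\times(C,C)+k\times(D,D)\big)+(k+1)\times(C,C)+\sum_{n=1}^{\infty}\omega_0 .\] Then the complexity of $\omega^*$ with respect to player 1 is $k^3+2k^2+1$, and the complexity of $\omega^*$ with respect to player 2 is $k^3+2k^2+k+1$.
   Context: Action pairs are written (action of player 1, action of player 2). The notation $n\times a$ denotes $n$ consecutive repetitions of the action pair $a$, and $+$ (and $\sum$) denotes concatenation of sequences of action pairs; $\sum_{n=1}^\infty\omega_0$ is the infinite periodic repetition of $\omega_0$. A pure automaton of player $i$ is a finite state machine $(Q,f,g,q^* )$ with output function $f:Q\to A_i$, transition function $g:Q\times A_{3-i}\to Q$ and initial state $q^*$: at stage $t$ in state $q^t$ it plays $f(q^t)$ and moves to $g(q^t,a_{3-i}^t)$, where $a_{3-i}^t$ is the other player's action at stage $t$; its size is $|Q|$. An automaton of player $i$ is compatible with a (finite or infinite) sequence of action pairs $\omega$ if, when player $3-i$ plays her coordinates of $\omega$ stage by stage, the automaton outputs player $i$'s coordinates of $\omega$ at every stage. The complexity of $\omega$ with respect to player $i$ is the size of the smallest automaton of player $i$ compatible with $\omega$. *)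

From HB Require Import structures.
From mathcomp Require Import all_boot.
Set Implicit Arguments. Unset Strict Implicit. Unset Printing Implicit Defensive.

Inductive act := C | D.

Definition act_eqb (a b : act) : bool :=
  match a, b with C, C | D, D => true | _, _ => false end.
Lemma act_eqP : Equality.axiom act_eqb.
Proof. by case; case; constructor. Qed.
HB.instance Definition _ := hasDecEq.Build act act_eqP.

Definition apair := (act * act)%type.

Inductive player := P1 | P2.

Definition own (i : player) (a : apair) : act :=
  match i with P1 => a.1 | P2 => a.2 end.
Definition other (i : player) (a : apair) : act :=
  match i with P1 => a.2 | P2 => a.1 end.

Record automaton := Automaton {
  aQ : finType;
  aout : aQ -> act;
  atrans : aQ -> act -> aQ;    (* g : Q x A_{3-i} -> Q *)
  ainit : aQ
}.

Definition asize (M : automaton) : nat := #|aQ M|.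

Fixpoint astate (i : player) (M : automaton) (omega : nat -> apair) (t : nat)
  : aQ M :=
  match t with
  | 0 => ainit M
  | t'.+1 => atrans (astate i M omega t') (other i (omega t'))
  end.

Definition compatible (i : player) (M : automaton) (omega : nat -> apair) : Prop :=
  forall t, aout (astate i M omega t) = own i (omega t).

Definition complexity_is (i : player) (omega : nat -> apair) (n : nat) : Prop :=
  (exists M, compatible i M omega /\ asize M = n) /\
  (forall M, compatible i M omega -> n <= asize M).

Definition rep (n : nat) (a : apair) : seq apair := nseq n a.

Definition omega0 (k1 k2 k3 : nat) : seq apair :=
  rep k1 (D, D) ++ rep k2 (D, C) ++ rep k3 (C, C).

Definition star_prefix (k : nat) : seq apair :=
  rep (k ^ 3) (D, D)
  ++ flatten (nseq k (rep k (C, C) ++ rep k (D, D)))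
  ++ rep k.+1 (C, C).

(* p followed by the infinite periodic repetition of w (w nonempty) *)
Definition then_periodic (p w : seq apair) (t : nat) : apair :=
  if t < size p then nth (D, D) p t
  else nth (D, D) w ((t - size p) %% size w).

Definition omega_star (k k1 k2 k3 : nat) : nat -> apair :=
  then_periodic (star_prefix k) (omega0 k1 k2 k3).

From mathcomp Require Import all_boot zify.
Set Implicit Arguments. Unset Strict Implicit. Unset Printing Implicit Defensive.

(* Along the prefix of omega* both players always play the same action, so the
   first difference between two continuations of omega* within the prefix is
   seen by both players.  Before the final run of k + 1 times (C,C) no run of
   (C,C) is that long, so any two earlier times are distinguishable; for player 2
   so are two times inside the final run, because the period starts with only
   k1 < k times (D,D) followed by (D,C), while any earlier (C,C)(D,D) is followed
   by k times (D,D).  Conversely, player 1 sees each period as D^(k1+k2) C^k3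
   and can play it, as well as the end of the final run, inside the last block
   k x (C,C) + k x (D,D) of the prefix, which saves k states; player 2 sees
   (D,C) as C and can only fold the periods back into the prefix. *)

Lemma astate_shift (i : player) (M : automaton) (w : nat -> apair) s t n :
  astate i M w s = astate i M w t ->
  (forall j, j < n -> w (s + j) = w (t + j)) ->
  astate i M w (s + n) = astate i M w (t + n).
Proof.
move=> est; elim: n => [|n IHn] wst; first by rewrite !addn0.
rewrite !addnS /= IHn => [|j ltjn]; last by apply: wst; lia.
by rewrite wst.
Qed.

Definition distinguishable (i : player) (w : nat -> apair) (s t : nat) : Prop :=
  exists n, (forall j, j < n -> w (s + j) = w (t + j)) /\
            own i (w (s + n)) <> own i (w (t + n)).

Lemma compatible_astate_neq (i : player) (M : automaton) (w : nat -> apair) s t :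
  compatible i M w -> distinguishable i w s t -> astate i M w s <> astate i M w t.
Proof.
move=> cM [n [wst own_neq]] est; apply: own_neq.
by rewrite -!cM (astate_shift est wst).
Qed.

Lemma compatible_size_ge (i : player) (w : nat -> apair) (n : nat) (M : automaton) :
  compatible i M w ->
  (forall s t, s < t < n -> distinguishable i w s t) -> n <= asize M.
Proof.
move=> cM dist.
pose f (x : 'I_n) := astate i M w x.
suff /leq_card : injective f by rewrite card_ord.
move=> x y fxy; apply: val_inj => /=.
case: (ltngtP x y) => // [ltxy | ltyx]; exfalso.
- by apply: (compatible_astate_neq cM (dist _ _ _)) fxy; rewrite ltxy ltn_ord.
- by apply: (compatible_astate_neq cM (dist _ _ _)) (esym fxy); rewrite ltyx ltn_ord.
Qed.

Lemma agree_or_first_difference (w : nat -> apair) s t n :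
  (forall j, j <= n -> w (s + j) = w (t + j)) \/
  exists2 m, m <= n & (forall j, j < m -> w (s + j) = w (t + j)) /\
                      w (s + m) <> w (t + m).
Proof.
elim: n => [|n [agree | [m lemn diff]]].
- case: (w (s + 0) =P w (t + 0)) => [e0 | ne0]; last by right; exists 0.
  by left => j; rewrite leqn0 => /eqP->.
- case: (w (s + n.+1) =P w (t + n.+1)) => [eS | neS].
    by left => j; rewrite leq_eqVlt ltnS => /orP[/eqP-> | /agree].
  by right; exists n.+1 => //; split => // j /agree.
- by right; exists m => //; apply: leqW.
Qed.

Lemma distinguishable_diag (i : player) (w : nat -> apair) s t n :
  (forall j, j < n -> w (s + j) = w (t + j)) ->
  (w (s + n)).1 = (w (s + n)).2 -> (w (t + n)).1 = (w (t + n)).2 ->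
  w (s + n) <> w (t + n) -> distinguishable i w s t.
Proof.
move=> agree diag_s diag_t neq; exists n; split => //.
move: diag_s diag_t neq; case: (w (s + n)) (w (t + n)) => [a b] [c d] /= <- <-.
by case: i => /= neq eq; apply: neq; rewrite eq.
Qed.

Lemma compatible_of_tracking (i : player) (w : nat -> apair) (n : nat)
    (sig : nat -> nat) (out : nat -> act) (tr : nat -> act -> nat) :
  sig 0 = 0 -> (forall t, sig t < n) ->
  (forall t, out (sig t) = own i (w t)) ->
  (forall t, tr (sig t) (other i (w t)) = sig t.+1) ->
  exists M, compatible i M w /\ asize M = n.
Proof.
case: n => [|n] sig0 sig_lt sig_out sig_tr; first by have := sig_lt 0.
pose M := @Automaton 'I_n.+1 out (fun q a => inord (tr q a)) ord0.
have astateE t : val (astate i M w t) = sig t.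
  by elim: t => [|t IHt] //=; rewrite IHt sig_tr inordK.
exists M; split; last by rewrite /asize card_ord.
by move=> t; rewrite /= astateE sig_out.
Qed.

Definition fold_period (N m t : nat) : nat :=
  if t < N + m then t else N + (t - N) %% m.

Section FoldPeriod.
Variables (N m : nat).
Hypothesis m_gt0 : 0 < m.

Lemma fold_period_lt t : fold_period N m t < N + m.
Proof. by rewrite /fold_period; case: ifP => // _; rewrite ltn_add2l ltn_mod. Qed.

Lemma fold_periodS t :
  fold_period N m t.+1 =
  if (fold_period N m t).+1 < N + m then (fold_period N m t).+1 else N.
Proof.
rewrite /fold_period; case: (ltnP t.+1 (N + m)) => [ltSt | leSt].
  by rewrite (ltnW ltSt) ltSt.
have [eqSt | ltt] := eqVneq t.+1 (N + m).
  by rewrite -eqSt ltnSn ltnn eqSt addKn modnn addn0.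
have ltt' : N + m <= t by lia.
rewrite (leq_gtF ltt') -addnS ltn_add2l subSn; last by lia.
have ltm := ltn_mod (t - N) m; rewrite m_gt0 in ltm.
rewrite {1}(divn_eq (t - N) m) -addnS modnMDl.
case: ltnP => [ltSm | geSm]; first by rewrite modn_small.
by rewrite (_ : _.+1 = m) ?modnn ?addn0 //; apply/eqP; rewrite eqn_leq ltm.
Qed.

Lemma periodic_fold (w : nat -> apair) :
  (forall t, N <= t -> w (t + m) = w t) -> forall t, w (fold_period N m t) = w t.
Proof.
move=> wper t; rewrite /fold_period; case: ltnP => // geNt.
have wq q r : w (N + r + q * m) = w (N + r).
  elim: q => [|q IHq]; first by rewrite addn0.
  by rewrite mulSnr addnA wper ?IHq //; lia.
by rewrite -(wq ((t - N) %/ m)) -addnA [_ %% _ + _]addnC -divn_eq subnKC //; lia.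
Qed.

Lemma compatible_of_periodic_tracking (i : player) (w : nat -> apair) (n : nat)
    (sig : nat -> nat) (out : nat -> act) (tr : nat -> act -> nat) :
  (forall t, N <= t -> w (t + m) = w t) -> sig 0 = 0 ->
  (forall t, t < N + m -> sig t < n) ->
  (forall t, t < N + m -> out (sig t) = own i (w t)) ->
  (forall t, t.+1 < N + m -> tr (sig t) (other i (w t)) = sig t.+1) ->
  tr (sig (N + m).-1) (other i (w (N + m).-1)) = sig N ->
  exists M, compatible i M w /\ asize M = n.
Proof.
move=> wper sig0 sig_lt sig_out sig_tr sig_loop.
have wfold := periodic_fold wper.
apply: (@compatible_of_tracking i w n (sig \o fold_period N m) out tr) => /= [|t|t|t].
- by rewrite /fold_period addn_gt0 m_gt0 orbT.
- exact/sig_lt/fold_period_lt.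
- by rewrite sig_out ?wfold ?fold_period_lt.
rewrite -wfold fold_periodS; case: ifP => [/sig_tr // | geS].
suff -> : fold_period N m t = (N + m).-1 by [].
by have := fold_period_lt t; lia.
Qed.

End FoldPeriod.

Lemma size_flatten_nseq (T : Type) n (s : seq T) :
  size (flatten (nseq n s)) = n * size s.
Proof. by elim: n => //= n IHn; rewrite size_cat IHn mulSn. Qed.

Lemma nth_flatten_nseq (T : Type) (x0 : T) n (s : seq T) i :
  i < n * size s -> nth x0 (flatten (nseq n s)) i = nth x0 s (i %% size s).
Proof.
elim: n i => [|n IHn] i //=; rewrite nth_cat mulSn => lti.
case: ltnP => [lt_is | le_si]; first by rewrite modn_small.
rewrite IHn; last by lia.
by rewrite -[in RHS](subnKC le_si) modnDl.
Qed.

Definition star_len (k : nat) : nat := k ^ 3 + 2 * k ^ 2 + k + 1.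

Lemma size_star_prefix k : size (star_prefix k) = star_len k.
Proof.
rewrite /star_prefix !size_cat size_flatten_nseq size_cat !size_nseq /star_len.
by rewrite (expnS k 1) expn1; lia.
Qed.

Section OmegaStarSegments.
Variables k k1 k2 k3 : nat.
Local Notation w := (omega_star k k1 k2 k3).

Lemma omega_star_prefix t :
  t < star_len k -> w t = nth (D, D) (star_prefix k) t.
Proof. by rewrite /omega_star /then_periodic size_star_prefix => ->. Qed.

Lemma omega_star_head t : t < k ^ 3 -> w t = (D, D).
Proof.
move=> ltt; rewrite omega_star_prefix /star_len; last by lia.
by rewrite nth_cat size_nseq ltt nth_nseq ltt.
Qed.

Lemma omega_star_block q r : q < k -> r < 2 * k ->
  w (k ^ 3 + q * (2 * k) + r) = if r < k then (C, C) else (D, D).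
Proof.
move=> ltq ltr; have ltblk : q * (2 * k) + r < k * (2 * k) by nia.
rewrite omega_star_prefix /star_len; last by rewrite (expnS k 1) expn1; lia.
rewrite -addnA nth_cat size_nseq ltnNge leq_addr /= addKn.
rewrite nth_cat size_flatten_nseq size_cat !size_nseq addnn -mul2n ltblk.
rewrite nth_flatten_nseq size_cat !size_nseq addnn -mul2n ?modnMDl ?modn_small //.
rewrite nth_cat size_nseq nth_nseq; case: ltnP => // ler.
by rewrite nth_nseq ltn_subLR // addnn -mul2n ltr.
Qed.

Lemma omega_star_run t : k ^ 3 + 2 * k ^ 2 <= t < star_len k -> w t = (C, C).
Proof.
move=> /andP[le_t ltt]; rewrite omega_star_prefix //.
move: le_t ltt; rewrite /star_len (expnS k 1) expn1 => le_t ltt.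
rewrite nth_cat size_nseq ltnNge (leq_trans _ le_t) ?leq_addr //=.
rewrite nth_cat size_flatten_nseq size_cat !size_nseq ltnNge.
rewrite (_ : k * (k + k) <= t - k ^ 3) /=; last by lia.
by rewrite (_ : _ :: _ = nseq k.+1 (C, C)) // nth_nseq; case: ifP => //; lia.
Qed.

Lemma omega_star_cycle i : i < k1 + k2 + k3 ->
  w (star_len k + i) =
  if i < k1 then (D, D) else if i < k1 + k2 then (D, C) else (C, C).
Proof.
move=> lti; rewrite /omega_star /then_periodic size_star_prefix.
rewrite ltnNge leq_addr /= addKn modn_small; last first.
  by rewrite /omega0 !size_cat !size_nseq addnA.
rewrite /omega0 nth_cat size_nseq; case: ltnP => [lt1 | ge1].
  by rewrite nth_nseq lt1.
rewrite nth_cat size_nseq ltn_subLR // !nth_nseq ltn_subLR //.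
by case: ifP => // ge2; rewrite ifT //; lia.
Qed.

Lemma omega_star_periodic t : star_len k <= t -> w (t + (k1 + k2 + k3)) = w t.
Proof.
move=> le_t; rewrite /omega_star /then_periodic size_star_prefix.
rewrite !ltnNge le_t (leq_trans le_t (leq_addr _ _)) /= -addnBAC //.
by rewrite /omega0 !size_cat !size_nseq [k1 + (k2 + k3)]addnA modnDr.
Qed.

Lemma omega_star_cycle_DD i : i < k1 -> w (star_len k + i) = (D, D).
Proof. by move=> lti; rewrite omega_star_cycle ?lti //; lia. Qed.

Lemma omega_star_cycle_DC i : k1 <= i < k1 + k2 -> w (star_len k + i) = (D, C).
Proof.
by move=> /andP[lei lti]; rewrite omega_star_cycle ?(leq_gtF lei) ?lti //; lia.
Qed.

Lemma omega_star_cycle_CC i :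
  k1 + k2 <= i < k1 + k2 + k3 -> w (star_len k + i) = (C, C).
Proof.
move=> /andP[lei lti]; rewrite omega_star_cycle // (leq_gtF lei).
by rewrite leq_gtF // (leq_trans (leq_addr _ _) lei).
Qed.

End OmegaStarSegments.

Lemma split_blocks a m n t :
  a <= t < a + n * m -> exists q r, [/\ q < n, r < m & t = a + q * m + r].
Proof.
move=> /andP[le_at lt_t]; have m_gt0 : 0 < m by case: m lt_t => //; lia.
exists ((t - a) %/ m), ((t - a) %% m); split; rewrite ?ltn_mod //.
- by rewrite ltn_divLR //; lia.
- by rewrite -addnA -divn_eq subnKC.
Qed.

(* Start of the last block [k x (C,C) + k x (D,D)] of the prefix. *)
Definition last_block (k : nat) : nat := k ^ 3 + (k - 1) * (2 * k).

Section OmegaStar.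
Variables k k1 k2 k3 : nat.
Hypotheses (k1_gt0 : 0 < k1) (k2_gt0 : 0 < k2) (k3_gt0 : 0 < k3).
Hypothesis k0_le_k : k1 + k2 + k3 <= k.
Local Notation w := (omega_star k k1 k2 k3).
Local Notation N := (star_len k).
Local Notation B := (last_block k).

Lemma last_blockE : k ^ 3 + 2 * k ^ 2 = B + 2 * k.
Proof. by rewrite /last_block (expnS k 1) expn1; nia. Qed.

Lemma star_lenE : N = B + 3 * k + 1.
Proof. by rewrite /star_len last_blockE; lia. Qed.

Lemma last_block_ge : 2 * k <= B.
Proof. by rewrite /last_block !expnS expn0; nia. Qed.

Lemma omega_star_last_block m :
  m < 2 * k -> w (B + m) = if m < k then (C, C) else (D, D).
Proof. by move=> ltm; rewrite omega_star_block //; lia. Qed.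

Lemma omega_star_before_last_block m : 0 < m <= k -> w (B - m) = (D, D).
Proof.
move=> /andP[m_gt0 lemk].
have -> : B - m = k ^ 3 + (k - 2) * (2 * k) + (2 * k - m).
  by rewrite /last_block (_ : k - 1 = (k - 2).+1) ?mulSnr; lia.
by rewrite omega_star_block; try case: ltnP => //; lia.
Qed.

Lemma omega_star_final_run t : B + 2 * k <= t < N -> w t = (C, C).
Proof. by rewrite -last_blockE; apply: omega_star_run. Qed.

Lemma split_middle t : k ^ 3 <= t < B + 2 * k ->
  exists q r, [/\ q < k, r < 2 * k & t = k ^ 3 + q * (2 * k) + r].
Proof.
move=> /andP[ge3 ltB]; apply: split_blocks.
by move: ltB; rewrite ge3 -last_blockE (expnS k 1) expn1; nia.
Qed.

Lemma omega_star_diag t : t < N + k1 -> (w t).1 = (w t).2.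
Proof.
move=> ltt; case: (ltnP t N) => [ltN | geN]; last first.
  by rewrite -(subnKC geN) omega_star_cycle_DD //; lia.
case: (ltnP t (k ^ 3)) => [lt3 | ge3]; first by rewrite omega_star_head.
case: (ltnP t (B + 2 * k)) => [ltB | geB]; last first.
  by rewrite omega_star_final_run ?geB.
have [q [r [ltq ltr ->]]] := split_middle (introT andP (conj ge3 ltB)).
by rewrite omega_star_block //; case: ifP.
Qed.

Lemma omega_star_defect_window a :
  a < B + 2 * k -> exists2 u, a <= u <= a + k & w u = (D, D).
Proof.
move=> lta; case: (ltnP a (k ^ 3)) => [lt3 | ge3].
  by exists a; rewrite ?omega_star_head // leqnn leq_addr.
have [q [r [ltq ltr ea]]] := split_middle (introT andP (conj ge3 lta)).
case: (ltnP r k) => [ltrk | gerk].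
  by exists (k ^ 3 + q * (2 * k) + k); rewrite ?omega_star_block ?ltnn //; lia.
by exists a; rewrite ?leqnn ?leq_addr // ea omega_star_block // ltnNge gerk.
Qed.

Lemma omega_star_defect_run p m : p < N -> w p.-1 = (C, C) -> w p = (D, D) ->
  m < k -> w (p + m) = (D, D).
Proof.
move=> ltp wC wD ltm.
case: (ltnP p.-1 (k ^ 3)) => [lt3 | ge3]; first by rewrite omega_star_head in wC.
case: (ltnP p (B + 2 * k)) => [ltB | geB]; last first.
  by rewrite omega_star_final_run ?geB in wD.
have [q [r [ltq ltr ep]]] : exists q r, [/\ q < k, r < 2 * k &
    p.-1 = k ^ 3 + q * (2 * k) + r] by apply: split_middle; lia.
move: wC; rewrite ep omega_star_block //; case: ltnP => // ltrk _.
case: (ltnP r.+1 k) => [ltr1 | ger1].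
  have ep' : p = k ^ 3 + q * (2 * k) + r.+1 by lia.
  by move: wD; rewrite ep' omega_star_block ?ltr1 //; lia.
have -> : p + m = k ^ 3 + q * (2 * k) + (k + m) by lia.
by rewrite omega_star_block // ?ltnNge ?leq_addr //; lia.
Qed.

Lemma omega_star_distinguishable_prefix i s t :
  s < t <= B + 2 * k -> distinguishable i w s t.
Proof.
(* If the two continuations agreed up to time [N - 1], the final run seen from
   [t] would be matched from [s] by a window containing a defection. *)
move=> /andP[ltst le_tB]; have eN := star_lenE.
have [agree | [m lem [agree neq]]] :=
  agree_or_first_difference w s t (N.-1 - t); last first.
  by apply: (distinguishable_diag _ agree _ _ neq); apply: omega_star_diag; lia.
have lta : s + (B + 2 * k - t) < B + 2 * k by lia.
have [u /andP[leu leu'] wu] := omega_star_defect_window lta.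
have wC : w (s + (u - s)) = (C, C) by rewrite agree ?omega_star_final_run //; lia.
by move: wC; rewrite subnKC ?wu //; lia.
Qed.

Lemma omega_star_distinguishable_final_run s t :
  s < t -> B + 2 * k < t < N -> distinguishable P2 w s t.
Proof.
(* Unless they already differ on the diagonal, the continuation from [s] meets
   (C,C)(D,D) where the one from [t] meets the period, and k (D,D) outlast k1. *)
move=> ltst /andP[ltt ltN]; have eN := star_lenE.
have wN : w N = (D, D) by rewrite -[N]addn0 omega_star_cycle_DD.
have [agree | [m lem [agree neq]]] := agree_or_first_difference w s t (N - t);
  last by apply: (distinguishable_diag _ agree _ _ neq); apply: omega_star_diag; lia.
have ep : t + (N - t) = N by lia.
have wsD : w (s + (N - t)) = (D, D) by rewrite agree // ep.
have wsC : w (s + (N - t)).-1 = (C, C).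
  rewrite -subn1 -addnBA ?subn_gt0 // agree ?omega_star_final_run //; lia.
have ltp : s + (N - t) < N by lia.
have wsDD := omega_star_defect_run ltp wsC wsD.
exists (N - t + k1); split => [j ltj | ].
  case: (leqP j (N - t)) => [lej | gtj]; first exact: agree.
  have -> : s + j = s + (N - t) + (j - (N - t)) by lia.
  have -> : t + j = N + (j - (N - t)) by lia.
  by rewrite wsDD ?omega_star_cycle_DD //; lia.
by rewrite !addnA ep wsDD ?omega_star_cycle_DC ?leqnn //; lia.
Qed.

(* Player 1's automaton reuses the last block: its (C,C) half for the rest of
   the final run and for the (C,C) of each period, its (D,D) half for the
   (D,D) and (D,C) of each period. *)
Definition p1_state (t : nat) : nat :=
  if t <= B + 2 * k then t
  else if t < N + k1 + k2 then t - (2 * k).+1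
  else t - (2 * k).+1 - (k1 + k2 + k3).

Definition p1_next (q : nat) (a : act) : nat :=
  if q == B + 2 * k then B
  else if (q == B + k + k1 + k2 - 1) && (a == C) then B + k - k3 else q.+1.

Lemma p1_state_lt t : t < N + (k1 + k2 + k3) -> p1_state t < B + 2 * k + 1.
Proof. by rewrite /p1_state star_lenE; case: ifP; [|case: ifP]; lia. Qed.

Lemma p1_state_out t : t < N + (k1 + k2 + k3) -> (w (p1_state t)).1 = (w t).1.
Proof.
move=> ltt; have eN := star_lenE; rewrite /p1_state.
case: ifP => // /negbT; rewrite -ltnNge => gtB.
case: (ltnP t N) => [ltN | /subnKC eT].
  rewrite ifT; last by lia.
  have -> : t - (2 * k).+1 = B + (t - B - (2 * k).+1) by lia.
  by rewrite omega_star_last_block ?ifT ?omega_star_final_run //; lia.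
move: ltt gtB; rewrite -{}eT; move: (t - N) => i lti gtB.
case: (ltnP i (k1 + k2)) => [lt12 | ge12].
  rewrite ifT; last by lia.
  have -> : N + i - (2 * k).+1 = B + (k + i) by lia.
  rewrite omega_star_last_block ?ifN; [ | lia | lia].
  by case: (ltnP i k1) => [lt1 | ge1];
    [rewrite omega_star_cycle_DD | rewrite omega_star_cycle_DC ?ge1].
rewrite ifN; last by lia.
have -> : N + i - (2 * k).+1 - (k1 + k2 + k3) = B + (k - k3 + (i - k1 - k2)) by lia.
by rewrite omega_star_last_block ?ifT ?omega_star_cycle_CC //; lia.
Qed.

Lemma p1_state_next t :
  t.+1 < N + (k1 + k2 + k3) -> p1_next (p1_state t) (w t).2 = p1_state t.+1.
Proof.
move=> ltt; have eN := star_lenE; rewrite /p1_next /p1_state.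
case: (ltngtP t (B + 2 * k)) => [ltB | gtB | ->].
- rewrite ifN; last by lia.
  case: eqP => [eX | _] //=.
  rewrite eX (_ : B + k + k1 + k2 - 1 = B + (k + k1 + k2 - 1)); last by lia.
  by rewrite omega_star_last_block ?ifN //; lia.
- case: (ltnP t (N + k1 + k2)) => [lt12 | ge12] /=.
    rewrite ifN; last by lia.
    case: eqP => [eX | nX] /=.
      have -> : t = N + (k1 + k2 - 1) by lia.
      by rewrite omega_star_cycle_DC /= ?ifN; lia.
    by rewrite ifT; lia.
  rewrite ifN; last by lia.
  case: eqP => [eX | _] /=; first by lia.
  by rewrite ifN; lia.
by rewrite eqxx ifT; lia.
Qed.

Lemma p1_state_loop :
  p1_next (p1_state (N + (k1 + k2 + k3)).-1) (w (N + (k1 + k2 + k3)).-1).2 =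
  p1_state N.
Proof.
have eN := star_lenE.
have -> : p1_state (N + (k1 + k2 + k3)).-1 = B + k - 1.
  by rewrite /p1_state !ifN; lia.
have -> : p1_state N = B + k by rewrite /p1_state ifN ?ifT; lia.
rewrite /p1_next ifN; last by lia.
by case: eqP => [eX | _] /=; lia.
Qed.

Lemma omega_star_complexity_P1 : complexity_is P1 w (k ^ 3 + 2 * k ^ 2 + 1).
Proof.
rewrite last_blockE; split.
  have k0_gt0 : 0 < k1 + k2 + k3 by lia.
  apply: (compatible_of_periodic_tracking (i := P1) (out := fun q => (w q).1)
    k0_gt0 (@omega_star_periodic k k1 k2 k3) _ p1_state_lt p1_state_out
    p1_state_next p1_state_loop).
  by rewrite /p1_state leq0n.
move=> M cM; apply: (compatible_size_ge cM) => s t /andP[ltst ltt].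
by apply: omega_star_distinguishable_prefix; lia.
Qed.

(* Player 2's automaton reuses the (D,D) half of the penultimate block, the
   (C,C) half of the last block and the end of the final run for the three
   parts of each period. *)
Definition p2_state (t : nat) : nat :=
  if t < N then t
  else if t < N + k1 + k2 then t - (3 * k).+1 - k1
  else t - (k1 + k2 + k3).

Definition p2_next (q : nat) (a : act) : nat :=
  if q == N.-1 then B - k1
  else if (q == B + k2 - 1) && (a == D) then N - k3 else q.+1.

Lemma p2_state_lt t : t < N + (k1 + k2 + k3) -> p2_state t < N.
Proof. by rewrite /p2_state star_lenE; case: ifP; [|case: ifP]; lia. Qed.

Lemma p2_state_out t : t < N + (k1 + k2 + k3) -> (w (p2_state t)).2 = (w t).2.
Proof.
move=> ltt; have eN := star_lenE; rewrite /p2_state.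
case: (ltnP t N) => // /subnKC eT.
move: ltt; rewrite -{}eT /=; move: (t - N) => i lti.
case: (ltnP i k1) => [lt1 | ge1].
  have -> : N + i - (3 * k).+1 - k1 = B - (k1 - i) by lia.
  by rewrite ifT ?omega_star_before_last_block ?omega_star_cycle_DD //; lia.
case: (ltnP i (k1 + k2)) => [lt12 | ge12].
  have -> : N + i - (3 * k).+1 - k1 = B + (i - k1) by lia.
  by rewrite ifT ?omega_star_last_block ?ifT ?omega_star_cycle_DC ?ge1 //; lia.
rewrite ifN; last by lia.
by rewrite omega_star_final_run ?omega_star_cycle_CC ?ge12 //; lia.
Qed.

Lemma p2_state_next t :
  t.+1 < N + (k1 + k2 + k3) -> p2_next (p2_state t) (w t).1 = p2_state t.+1.
Proof.
move=> ltt; have eN := star_lenE; have geB := last_block_ge.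
rewrite /p2_next /p2_state.
case: (ltnP t.+1 N) => [ltN | geN].
  rewrite ltnW // ifN; last by lia.
  case: eqP => [eX | _] //=.
  have -> : t = B + (k2 - 1) by lia.
  have lt2 : k2 - 1 < k by lia.
  by rewrite omega_star_last_block ?lt2 //; lia.
have [eN1 | neN1] := eqVneq t N.-1.
  have ltN : t < N by lia.
  by rewrite ltN eN1 eqxx ifT; lia.
have geN' : N <= t by lia.
rewrite (leq_gtF geN') /=.
case: (ltnP t (N + k1 + k2)) => [lt12 | ge12] /=.
  rewrite ifN; last by lia.
  case: eqP => [eX | nX] /=.
    have -> : t = N + (k1 + k2 - 1) by lia.
    by rewrite omega_star_cycle_DC /= ?ifN; lia.
  by rewrite ifT; lia.
rewrite ifN; last by lia.
case: eqP => [eX | _] /=; first by lia.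
by rewrite ifN; lia.
Qed.

Lemma p2_state_loop :
  p2_next (p2_state (N + (k1 + k2 + k3)).-1) (w (N + (k1 + k2 + k3)).-1).1 =
  p2_state N.
Proof.
have eN := star_lenE.
have -> : p2_state (N + (k1 + k2 + k3)).-1 = N.-1 by rewrite /p2_state !ifN; lia.
by rewrite /p2_next /p2_state eqxx ltnn ifT; lia.
Qed.

Lemma omega_star_complexity_P2 : complexity_is P2 w (k ^ 3 + 2 * k ^ 2 + k + 1).
Proof.
split.
  have k0_gt0 : 0 < k1 + k2 + k3 by lia.
  apply: (compatible_of_periodic_tracking (i := P2) (out := fun q => (w q).2)
    k0_gt0 (@omega_star_periodic k k1 k2 k3) _ p2_state_lt p2_state_out
    p2_state_next p2_state_loop).
  by rewrite /p2_state /star_len addn1.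
move=> M cM; apply: (compatible_size_ge cM) => s t /andP[ltst ltt].
case: (leqP t (B + 2 * k)) => [le_tB | gt_tB].
  by apply: omega_star_distinguishable_prefix; rewrite ltst.
by apply: omega_star_distinguishable_final_run; rewrite ?gt_tB.
Qed.

End OmegaStar.

Theorem lemma1 (k k0 k1 k2 k3 : nat) :
  k0 ^ 2 + k0 <= k ->
  k < k0.+1 ^ 2 + k0.+1 ->
  0 < k1 -> 0 < k2 -> 0 < k3 ->
  k1 + k2 + k3 = k0 ->
  complexity_is P1 (omega_star k k1 k2 k3) (k ^ 3 + 2 * k ^ 2 + 1) /\
  complexity_is P2 (omega_star k k1 k2 k3) (k ^ 3 + 2 * k ^ 2 + k + 1).
Proof.
move=> k0_bound _ k1_gt0 k2_gt0 k3_gt0 sum_k0.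
have k0_le_k : k1 + k2 + k3 <= k by rewrite sum_k0 (leq_trans _ k0_bound) ?leq_addl.
by split; [apply: omega_star_complexity_P1 | apply: omega_star_complexity_P2].
Qed.
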